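(* Let $E$ be a second countable Stone space with at least four points. Then $E$ admits a pants decomposition.
   Context: A Stone space is a compact, Hausdorff, totally disconnected space. A cut of $E$ is an unordered partition of $E$ into two disjoint clopen sets $U,V$, written $U\sqcup V$; it is non-peripheral if each of $U,V$ contains at least two points. Two cuts $U\sqcup V$, $U'\sqcup V'$ cross if all four sets $U\cap U'$, $U\cap V'$, $V\cap U'$, $V\cap V'$ are nonempty; otherwise they are compatible. A pants decomposition of $E$ is a countable (finite or countably infinite) collection $\Gamma=\{\gamma_n\}$ of non-peripheral cuts such that: (1) any two cuts in $\Gamma$ are compatible; (2) every non-peripheral cut $\gamma\notin\Gamma$ crosses some cut of $\Gamma$; (3) for every non-peripheral cut $\gamma\notin\Gamma$, the set of $\gamma_j\in\Gamma$ crossing $\gamma$ is finite. *)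

From HB Require Import structures.
From mathcomp Require Import all_boot all_order.
From mathcomp Require Import boolp classical_sets functions cardinality topology.
Set Implicit Arguments. Unset Strict Implicit. Unset Printing Implicit Defensive.
Local Open Scope classical_set_scope.

Section Cuts.
Context {T : topologicalType}.

Definition stone_space : Prop :=
  [/\ compact [set: T], hausdorff_space T & totally_disconnected [set: T]].

Definition is_cut (g : set (set T)) : Prop :=
  exists U V : set T, [/\ clopen U, clopen V, U `&` V = set0,
                          U `|` V = [set: T] & g = [set U; V]].

Definition has_two_points (A : set T) : Prop :=
  exists x y, [/\ A x, A y & x <> y].

Definition nonperipheral_cut (g : set (set T)) : Prop :=
  is_cut g /\ forall W, g W -> has_two_points W.

Definition cross (g h : set (set T)) : Prop :=
  forall W W', g W -> h W' -> W `&` W' !=set0.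

Definition compatible (g h : set (set T)) : Prop := ~ cross g h.

Definition pants_decomposition (G : set (set (set T))) : Prop :=
  [/\ countable G,
      (forall g, G g -> nonperipheral_cut g),
      (forall g h, G g -> G h -> compatible g h),
      (forall g, nonperipheral_cut g -> ~ G g -> exists2 h, G h & cross h g)
    & (forall g, nonperipheral_cut g -> ~ G g ->
         finite_set [set h | G h /\ cross h g])].

End Cuts.

(* Enumerate the countably many clopen sets as B_0, B_1, ...  A finite
   sequence of bits s selects the "node" of points lying in B_i or in its
   complement according to the i-th bit; nodes form a binary tree, so any two
   of them are disjoint or nested, and the non-peripheral cuts {N, ~N} with N
   a node are pairwise compatible.  A cut {U, ~U} with U = B_j can only cross
   node cuts of depth <= j, since deeper nodes lie inside U or inside ~U.
   Finally let s be the deepest node meeting both U and ~U: each child of s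
   lies on one side, so the parts of s in U and in ~U are nodes; either the
   node cut of s crosses {U, ~U}, or the outside of s lies on one side and
   {U, ~U} is itself a node cut. *)
From HB Require Import structures.
From mathcomp Require Import all_boot all_order.
From mathcomp Require Import boolp classical_sets functions cardinality topology.
Local Open Scope classical_set_scope.

Section Cuts.
Context {T : topologicalType}.

Definition cut_of (A : set T) : set (set T) := [set A; ~` A].

Lemma cut_ofC A : cut_of (~` A) = cut_of A.
Proof. by rewrite /cut_of setCK setUC. Qed.

Lemma is_cut_of A : clopen A -> is_cut (cut_of A).
Proof.
by move=> cA; exists A, (~` A); split; rewrite ?setICr ?setUCr //; apply: clopenC.
Qed.

Lemma is_cutP g : is_cut g -> exists2 A, clopen A & g = cut_of A.
Proof.
move=> [U [V [cU _ UV0 UVT ->]]]; exists U => //.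
suff -> : V = ~` U by [].
apply/seteqP; split => [x Vx Ux|x nUx].
- by have : (U `&` V) x by []; rewrite UV0.
- by have : [set: T] x by []; rewrite -UVT => -[].
Qed.

Lemma two_points_split [P A] :
  P `&` A !=set0 -> P `&` ~` A !=set0 -> @has_two_points T P.
Proof. by move=> [x [Px Ax]] [y [Py nAy]]; exists x, y; split => // xy; rewrite xy in Ax. Qed.

Lemma nonperipheral_cut_of A :
  clopen A -> has_two_points A -> has_two_points (~` A) ->
  nonperipheral_cut (cut_of A).
Proof. by move=> cA ?; split; [exact: is_cut_of | move=> W [->|->]]. Qed.

Lemma nonperipheral_cutP [g] : nonperipheral_cut g ->
  exists A, [/\ clopen A, g = cut_of A, A !=set0 & ~` A !=set0].
Proof.
move=> [/is_cutP [A cA ->] two]; exists A; split => //.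
- by have [x [_ [Ax _ _]]] := two A (or_introl erefl); exists x.
- by have [x [_ [Ax _ _]]] := two (~` A) (or_intror erefl); exists x.
Qed.

Lemma cross_cut_of A B : cross (cut_of A) (cut_of B) <->
  [/\ A `&` B !=set0, A `&` ~` B !=set0, ~` A `&` B !=set0 & ~` A `&` ~` B !=set0].
Proof.
split => [cr|[? ? ? ?] W W' [->|->] [->|->] //].
by split; apply: cr; rewrite /cut_of /=; tauto.
Qed.

Lemma nested_compatible A B :
  A `&` B = set0 \/ A `<=` B \/ B `<=` A -> compatible (cut_of A) (cut_of B).
Proof.
move=> AB /cross_cut_of [[x ABx] [y [Ay nBy]] [z [nAz Bz]] _].
case: AB => [AB0|[/(_ y Ay)//|/(_ z Bz)//]].
by move: ABx; rewrite AB0.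
Qed.

End Cuts.

Section Nodes.
Context {T : topologicalType}.
Variable B : nat -> set T.

Definition side (A : set T) (b : bool) : set T := if b then A else ~` A.

Definition node (s : seq bool) : set T :=
  [set x | forall i, (i < size s)%N -> side (B i) (nth false s i) x].

Lemma node_nil : node [::] = setT.
Proof. by apply/seteqP; split => x // _ i. Qed.

Lemma node_rcons s b : node (rcons s b) = node s `&` side (B (size s)) b.
Proof.
apply/seteqP; split => x /=.
- move=> sx; split => [i lti|].
  + by have := sx i; rewrite size_rcons nth_rcons lti; apply; apply: ltnW.
  + by have := sx (size s); rewrite size_rcons nth_rcons ltnn eqxx; apply.
- move=> [sx bx] i; rewrite size_rcons ltnS leq_eqVlt => /orP[/eqP->|lti].
  + by rewrite nth_rcons ltnn eqxx.
  + by rewrite nth_rcons lti; apply: sx.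
Qed.

Lemma node_children s :
  node s = node (rcons s true) `|` node (rcons s false).
Proof. by rewrite !node_rcons -setIUr setUv setIT. Qed.

Lemma node_clopen s : (forall i, clopen (B i)) -> clopen (node s).
Proof.
move=> cB; elim/last_ind: s => [|s b IH]; first by rewrite node_nil; apply: clopenT.
by rewrite node_rcons; apply: clopenI => //; case: b; [exact: cB | exact: clopenC set0 (cB _)].
Qed.

Lemma node_sub_side [s j] :
  (j < size s)%N -> node s `<=` side (B j) (nth false s j).
Proof. by move=> ltj x /(_ j ltj). Qed.

Lemma node_nested s t :
  node s `&` node t = set0 \/ node s `<=` node t \/ node t `<=` node s.
Proof.
have [[i [lis lit bst]]|agree] := pselect (exists i, [/\ (i < size s)%N,
    (i < size t)%N & nth false s i <> nth false t i]).
  left; apply/seteqP; split => // x [/(node_sub_side lis) sx /(node_sub_side lit)].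
  by move: sx bst; case: (nth false s i); case: (nth false t i).
have eq_nth i : (i < size s)%N -> (i < size t)%N -> nth false s i = nth false t i.
  by move=> lis lit; apply: contrapT => bst; apply: agree; exists i.
right; case: (leqP (size s) (size t)) => st; [right|left] => x xn i lti.
- by rewrite eq_nth ?(leq_trans lti st) //; apply: xn; apply: leq_trans lti st.
- by rewrite -eq_nth ?(ltn_trans lti st) //; apply: xn; apply: ltn_trans lti st.
Qed.

Definition mixed (A : set T) (s : seq bool) : Prop :=
  node s `&` A !=set0 /\ node s `&` ~` A !=set0.

Lemma mixedC A s : mixed (~` A) s <-> mixed A s.
Proof. by rewrite /mixed setCK; split => -[]. Qed.

Lemma not_mixed [A s] : ~ mixed A s -> node s `<=` A \/ node s `<=` ~` A.
Proof.
move=> nm; apply: contrapT => /not_orP[/nonsubset[x [sx nAx]] /nonsubset[y [sy nnAy]]].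
by apply: nm; split; [exists y; split => //; apply: contrapT | exists x].
Qed.

Lemma mixed_size j s : mixed (B j) s -> (size s <= j)%N.
Proof.
move=> [[x [sx Bx]] [y [sy nBy]]]; rewrite leqNgt; apply/negP => ltj.
move: (node_sub_side ltj x sx) (node_sub_side ltj y sy).
by case: (nth false s j).
Qed.

Lemma deepest_mixed j :
  mixed (B j) [::] -> exists s, mixed (B j) s /\ forall b, ~ mixed (B j) (rcons s b).
Proof.
move=> m0; apply: contrapT => /forallNP no_deepest.
have deeper k : exists2 s, mixed (B j) s & size s = k.
  elim: k => [|k [s ms <-]]; first by exists [::].
  have /not_andP[//|/existsNP[b /contrapT mb]] := no_deepest s.
  by exists (rcons s b); rewrite ?size_rcons.
have [s /mixed_size] := deeper j.+1.
by move=> /[swap] ->; rewrite ltnn.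
Qed.

Lemma deepest_mixed_meet [A s] : mixed A s -> (forall b, ~ mixed A (rcons s b)) ->
  exists t, node s `&` A = node t.
Proof.
move=> [[x [sx Ax]] [y [sy nAy]]] leaf.
have meet_in C : C `<=` A -> C `&` A = C by apply: setIidl.
have meet_out C : C `<=` ~` A -> C `&` A = set0 by move=> ?; apply/disjoints_subset.
have [T_A|T_nA] := not_mixed (leaf true); have [F_A|F_nA] := not_mixed (leaf false).
- by move: sy; rewrite node_children => -[/T_A|/F_A].
- by exists (rcons s true); rewrite node_children setIUl meet_in // meet_out ?setU0.
- by exists (rcons s false); rewrite node_children setIUl meet_out // meet_in ?set0U.
- by move: sx; rewrite node_children => -[/T_nA|/F_nA].
Qed.

End Nodes.

Definition node_cuts {T : topologicalType} (B : nat -> set T) : set (set (set T)) :=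
  [set g | nonperipheral_cut g /\ exists s, g = cut_of (node B s)].

Lemma finite_size_le n : finite_set [set s : seq bool | (size s <= n)%N].
Proof.
elim: n => [|n IH].
  by apply: (sub_finite_set _ (finite_set1 [::])) => -[].
pose grow b := cons b @` [set s : seq bool | (size s <= n)%N].
apply: (sub_finite_set (B := [set [::]] `|` (grow true `|` grow false))).
  by move=> [|[] s] /= sn; [left | right; left; exists s | right; right; exists s].
by rewrite !finite_setU; split; [apply: finite_set1 | split; apply: finite_image IH].
Qed.

Section NodeCuts.
Context {T : topologicalType}.
Variable B : nat -> set T.
Hypothesis clopenB : forall i, clopen (B i).
Hypothesis enumB : forall U, clopen U -> exists j, B j = U.

Lemma node_cuts_countable : countable (node_cuts B).
Proof.
apply: (sub_countable _ (countableP (@setT (seq bool)))).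
apply: card_le_trans (card_image_le (cut_of \o node B) setT).
by apply: subset_card_le => g [_ [s ->]]; exists s.
Qed.

Lemma node_cuts_compatible g h : node_cuts B g -> node_cuts B h -> compatible g h.
Proof. by move=> [_ [s ->]] [_ [t ->]]; apply/nested_compatible/node_nested. Qed.

Lemma node_cuts_crossing_finite A : clopen A ->
  finite_set [set h | node_cuts B h /\ cross h (cut_of A)].
Proof.
move=> /enumB [j <-].
apply: (sub_finite_set _ (finite_image (cut_of \o node B) (finite_size_le j))).
move=> h [[_ [s ->]] /cross_cut_of [sB sC _ _]]; exists s => //.
exact: mixed_size (conj sB sC).
Qed.

Lemma node_cuts_maximal A : clopen A -> A !=set0 -> ~` A !=set0 ->
  nonperipheral_cut (cut_of A) -> ~ node_cuts B (cut_of A) ->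
  exists2 h, node_cuts B h & cross h (cut_of A).
Proof.
move=> cA A0 nA0 npA notG; have [j BA] := enumB _ cA.
have [s [ms leaf]] : exists s, mixed B A s /\ forall b, ~ mixed B A (rcons s b).
  by rewrite -BA; apply: deepest_mixed; rewrite /mixed node_nil !setTI BA.
have [tA sA] := deepest_mixed_meet B ms leaf.
have msC : mixed B (~` A) s by apply/mixedC.
have leafC b : ~ mixed B (~` A) (rcons s b) by rewrite mixedC; apply: leaf.
have [tC sC] := deepest_mixed_meet B msC leafC.
have [out_A|/nonsubset[d [nsd nAd]]] := pselect (~` node B s `<=` A).
  have eC : ~` A = node B tC by rewrite -sC setIidr //; apply: subsetCl.
  by exfalso; apply: notG; split => //; exists tC; rewrite -eC cut_ofC.
have [out_C|/nonsubset[c [nsc /contrapT Ac]]] := pselect (~` node B s `<=` ~` A).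
  have eA : A = node B tA by rewrite -sA setIidr //; apply: subsetC2.
  by exfalso; apply: notG; split => //; exists tA; rewrite -eA.
have [[x [sx Ax]] [y [sy nAy]]] := ms.
have crs : cross (cut_of (node B s)) (cut_of A).
  by apply/cross_cut_of; split; [exists x | exists y | exists c | exists d].
exists (cut_of (node B s)) => //; split; last by exists s.
apply: nonperipheral_cut_of; first exact: node_clopen.
- exact: two_points_split ms.1 ms.2.
- by apply: (two_points_split (A := A)); [exists c | exists d]; split.
Qed.

End NodeCuts.

(* [clopen_countable] is stated for pointed spaces. *)
Definition pointed_at {E : topologicalType} (a : E) : Type := E.
HB.instance Definition _ (E : topologicalType) (a : E) := Topological.on (pointed_at a).
HB.instance Definition _ (E : topologicalType) (a : E) := isPointed.Build (pointed_at a) a.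

Lemma clopen_enum {E : topologicalType} (a : E) :
  compact [set: E] -> @second_countable E ->
  exists2 B : nat -> set E, forall n, clopen (B n) & forall U, clopen U -> exists n, B n = U.
Proof.
move=> cE sE.
have /pfcard_geP[/seteqP[/(_ setT clopenT)]//|[f]] :=
  @clopen_countable (pointed_at a) cE sE.
exists f => [n|U cU]; first exact: (@funS _ _ setT _ f n).
by have [n _ <-] := @surj _ _ setT _ f U cU; exists n.
Qed.

Theorem mainTheorem5 (E : topologicalType) :
  @stone_space E -> @second_countable E ->
  (exists a b c d : E,
     [/\ a <> b, a <> c, a <> d & [/\ b <> c, b <> d & c <> d]]) ->
  exists G : set (set (set E)), pants_decomposition G.
Proof.
move=> [cE _ _] sE [a _].
have [B clopenB enumB] := clopen_enum a cE sE.
exists (node_cuts B); split.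
- exact: node_cuts_countable.
- by move=> g [].
- exact: node_cuts_compatible.
- move=> g /[dup] npg /nonperipheral_cutP[A [cA eg A0 nA0]].
  by rewrite eg in npg *; apply: node_cuts_maximal.
- move=> g /nonperipheral_cutP[A [cA -> _ _]] _.
  exact: node_cuts_crossing_finite.
Qed.
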